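(* Let $m$ be a non-negative integer. Then there is at most one tuple of complex numbers $(c_0,c_2,c_4,\dots,c_{2m})$ such that, identically as meromorphic functions of $s\in\mathbb{C}$, $$\zeta(-2m-1,s+2m+1)+c_{2m}\zeta(-2m,s+2m)+c_{2m-2}\zeta(-2m+2,s+2m-2)+\cdots+c_2\zeta(-2,s+2)+c_0\,\zeta(0,s)/2\equiv0;$$ that is, if such coefficients exist, they are uniquely determined.
   Context: For an integer $c\ge 0$, $\zeta(-c,s+c)$ denotes the Euler–Zagier double zeta function $\zeta(s_1,s_2)=\sum_{1\le n_1<n_2} n_1^{-s_1}n_2^{-s_2}$ evaluated at $(s_1,s_2)=(-c,s+c)$; i.e. it is the meromorphic continuation to all $s\in\mathbb{C}$ of the series $\sum_{m,n\ge1} m^{c}(m+n)^{-s-c}$, which converges absolutely for $\Re(s)>2$. *)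

From Stdlib Require Import Reals.
From Coquelicot Require Import Coquelicot.
Open Scope R_scope.

(* Complex power N^(-s) = exp(-s ln N) for a positive integer N and s : C:
   exp(-Re s * ln N) * (cos(Im s * ln N) - i sin(Im s * ln N)). *)
Definition cpow_neg (N : nat) (s : C) : C :=
  Cmult (RtoC (exp (- Re s * ln (INR N))))
        (cos (Im s * ln (INR N)), - sin (Im s * ln (INR N))).

(* Summand of zeta(-c, s+c) = sum_{m,n>=1} m^c (m+n)^(-s-c);
   indices i, j >= 0 stand for m = i+1, n = j+1. *)
Definition dz_term (c : nat) (s : C) (i j : nat) : C :=
  Cmult (RtoC (INR (S i) ^ c))
        (cpow_neg (S i + S j) (Cplus s (RtoC (INR c)))).

(* zeta(-c, s+c) on its domain of absolute convergence Re s > 2, as the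
   (absolutely convergent, hence order-independent) iterated double series. *)
Definition dzeta (c : nat) (s : C) : C :=
  (Series (fun i => Series (fun j => Re (dz_term c s i j))),
   Series (fun i => Series (fun j => Im (dz_term c s i j)))).

(* The combination
   zeta(-2m-1,s+2m+1) + sum_{k=1}^m c_{2k} zeta(-2k,s+2k) + c_0 zeta(0,s)/2,
   where coef k plays the role of c_{2k}. *)
Definition combo (m : nat) (coef : nat -> C) (s : C) : C :=
  Cplus (dzeta (2 * m + 1) s)
        (sum_n (fun k => Cmult (Cmult (coef k) (dzeta (2 * k) s))
                               (match k with O => RtoC (/ 2) | S _ => RtoC 1 end)) m).

(* At s = n for integers n >= 4, the differences of the real parts and of the
   imaginary parts of two admissible coefficient tuples give reals r_0, ..., r_m
   with sum_k r_k zeta(-2k, n + 2k) = 0 for all n >= 4 (the term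
   zeta(-2m-1, s+2m+1) cancels). Grouping the double series along a + b = N turns
   this into the Dirichlet series sum_{N >= 2} N^-n sum_{0<a<N} P(a/N) with
   P(x) = sum_k r_k x^(2k) and bounded coefficients; such a series vanishes at all
   large integers only if every coefficient does. By Faulhaber's formula,
   sum_{0<a<N} P(a/N) is N times a polynomial in 1/N whose coefficient of N^-2k is
   r_k B_2k plus terms in the r_k' with k' > k. No even Bernoulli number B_2k
   (k >= 1) vanishes: by Faulhaber's formula at N = 3, 3 B_2k is 3-integral and
   congruent to 1 + 4^k, hence to 2, modulo 3. So the r_k vanish from the top
   down, and finally r_0 = P(1/2) = 0. *)

From Stdlib Require Import Reals Lra Lia ZArith Znumtheory.
From Coquelicot Require Import Coquelicot.
Open Scope R_scope.

Fixpoint fsum (n : nat) (f : nat -> R) : R :=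
  match n with O => 0 | S n' => fsum n' f + f n' end.

Lemma fsum_ext_lt n f g : (forall i, (i < n)%nat -> f i = g i) -> fsum n f = fsum n g.
Proof.
  induction n as [|n IH]; simpl; intros H; auto.
  rewrite IH, H by (intros; try apply H; lia). reflexivity.
Qed.

Lemma fsum_ext n f g : (forall i, f i = g i) -> fsum n f = fsum n g.
Proof. intros H; apply fsum_ext_lt; auto. Qed.

Lemma fsum_plus n f g : fsum n (fun i => f i + g i) = fsum n f + fsum n g.
Proof. induction n as [|n IH]; simpl; [lra|]. rewrite IH; ring. Qed.

Lemma fsum_minus n f g : fsum n (fun i => f i - g i) = fsum n f - fsum n g.
Proof. induction n as [|n IH]; simpl; [lra|]. rewrite IH; ring. Qed.

Lemma fsum_scal_l n c f : fsum n (fun i => c * f i) = c * fsum n f.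
Proof. induction n as [|n IH]; simpl; [lra|]. rewrite IH; ring. Qed.

Lemma fsum_eq0 n f : (forall i, (i < n)%nat -> f i = 0) -> fsum n f = 0.
Proof.
  induction n as [|n IH]; simpl; intros H; auto.
  rewrite IH, H by (intros; try apply H; lia). ring.
Qed.

Lemma fsum_Sl n f : fsum (S n) f = f 0%nat + fsum n (fun i => f (S i)).
Proof. induction n as [|n IH]; simpl in *; [ring|]. rewrite IH. ring. Qed.

Lemma fsum_Sr n f : fsum (S n) f = fsum n f + f n.
Proof. reflexivity. Qed.

Lemma fsum_add n k f : fsum (n + k) f = fsum n f + fsum k (fun i => f (n + i)%nat).
Proof.
  induction k as [|k IH]; simpl; [rewrite Nat.add_0_r; ring|].
  rewrite Nat.add_succ_r. simpl. rewrite IH. ring.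
Qed.

Lemma fsum_swap n m (f : nat -> nat -> R) :
  fsum n (fun i => fsum m (f i)) = fsum m (fun j => fsum n (fun i => f i j)).
Proof.
  induction n as [|n IH]; simpl.
  - symmetry; apply fsum_eq0; auto.
  - rewrite IH, <- fsum_plus. reflexivity.
Qed.

Lemma fsum_triangle n (f : nat -> nat -> R) :
  fsum n (fun i => fsum (n - i) (f i)) = fsum n (fun t => fsum (S t) (fun i => f i (t - i)%nat)).
Proof.
  induction n as [|n IH]; [reflexivity|].
  change (fsum (S n) ?g) with (fsum n g + g n). cbv beta. rewrite <- IH.
  rewrite (fsum_ext_lt n _ (fun i => fsum (n - i) (f i) + f i (n - i)%nat)).
  - rewrite fsum_plus. change (fsum (S n) ?g) with (fsum n g + g n). cbv beta.
    replace (S n - n)%nat with 1%nat by lia. rewrite Nat.sub_diag. simpl. ring.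
  - intros i Hi. replace (S n - i)%nat with (S (n - i)) by lia. reflexivity.
Qed.

Lemma Rabs_fsum n f : Rabs (fsum n f) <= fsum n (fun i => Rabs (f i)).
Proof.
  induction n as [|n IH]; simpl; [rewrite Rabs_R0; lra|].
  eapply Rle_trans; [apply Rabs_triang | lra].
Qed.

Lemma fsum_le n f g : (forall i, (i < n)%nat -> f i <= g i) -> fsum n f <= fsum n g.
Proof.
  induction n as [|n IH]; simpl; intros H; [lra|].
  assert (fsum n f <= fsum n g) by (apply IH; intros; apply H; lia).
  specialize (H n ltac:(lia)). lra.
Qed.

Lemma fsum_delta n k v : (k < n)%nat -> fsum n (fun i => if Nat.eqb i k then v else 0) = v.
Proof.
  intros Hk. replace n with (k + S (n - S k))%nat by lia.
  rewrite fsum_add, fsum_Sl, !fsum_eq0, Nat.add_0_r, Nat.eqb_refl; [ring| |].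
  - intros i _. destruct (Nat.eqb_spec (k + S i) k); [lia|reflexivity].
  - intros i Hi. destruct (Nat.eqb_spec i k); [lia|reflexivity].
Qed.

Lemma fsum_pad n M f : (n <= M)%nat ->
  fsum n f = fsum M (fun i => if Nat.ltb i n then f i else 0).
Proof.
  intros H. replace M with (n + (M - n))%nat by lia.
  rewrite fsum_add, (fsum_eq0 (M - n)), Rplus_0_r.
  - apply fsum_ext_lt. intros i Hi. destruct (Nat.ltb_spec i n); [reflexivity|lia].
  - intros i _. destruct (Nat.ltb_spec (n + i) n); [lia|reflexivity].
Qed.

Lemma sum_f_R0_fsum f n : sum_f_R0 f n = fsum (S n) f.
Proof. induction n as [|n IH]; simpl in *; [ring|]. rewrite IH. reflexivity. Qed.

Lemma Re_sum_n (f : nat -> C) m : Re (sum_n f m) = fsum (S m) (fun k => Re (f k)).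
Proof.
  induction m as [|m IH]; [rewrite sum_O; simpl; ring|].
  rewrite sum_Sn, fsum_Sr, <- IH. reflexivity.
Qed.

Lemma Im_sum_n (f : nat -> C) m : Im (sum_n f m) = fsum (S m) (fun k => Im (f k)).
Proof.
  induction m as [|m IH]; [rewrite sum_O; simpl; ring|].
  rewrite sum_Sn, fsum_Sr, <- IH. reflexivity.
Qed.

(** * Bernoulli numbers and Faulhaber's formula *)

(* [bern n] is B_n / n!, the Taylor coefficient of x / (e^x - 1) at x^n (so
   [bern 1 = -1/2]); [bern_table M] tabulates [bern 0], ..., [bern M]. *)
Fixpoint bern_table (M : nat) : nat -> R :=
  match M with
  | O => fun _ => 1
  | S M' => fun j => if Nat.leb j M' then bern_table M' j
            else - fsum (S M') (fun i => bern_table M' i / INR (fact (S M' + 1 - i)))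
  end.

Definition bern (n : nat) : R := bern_table n n.

Lemma bern_table_eq M j : (j <= M)%nat -> bern_table M j = bern j.
Proof.
  induction M as [|M IH]; intros H.
  - replace j with 0%nat by lia; reflexivity.
  - destruct (Nat.leb_spec j M).
    + simpl. rewrite (proj2 (Nat.leb_le j M)) by lia. auto.
    + replace j with (S M) by lia. reflexivity.
Qed.

Lemma bern_rec M :
  fsum (S M) (fun j => bern j / INR (fact (M + 1 - j))) = if Nat.eqb M 0 then 1 else 0.
Proof.
  destruct M as [|M]; [unfold bern; simpl; field|].
  simpl Nat.eqb. rewrite fsum_Sr.
  assert (Hlast : bern (S M) = - fsum (S M) (fun i => bern i / INR (fact (S M + 1 - i)))).
  { unfold bern at 1. cbn [bern_table]. rewrite (proj2 (Nat.leb_gt (S M) M)) by lia.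
    f_equal. apply fsum_ext_lt. intros i Hi. rewrite bern_table_eq by lia. reflexivity. }
  rewrite Hlast. replace (S M + 1 - S M)%nat with 1%nat by lia.
  replace (INR (fact 1)) with 1 by reflexivity. unfold Rdiv at 2. rewrite Rinv_1. ring.
Qed.

Lemma pow_succ_sub_pow x d : ((x + 1) ^ d - x ^ d) / INR (fact d) =
  fsum d (fun l => x ^ l / (INR (fact l) * INR (fact (d - l)))).
Proof.
  rewrite binomial, sum_f_R0_fsum, fsum_Sr.
  unfold Binomial.C. rewrite Nat.sub_diag, !pow1.
  replace (INR (fact d) / (INR (fact d) * INR (fact 0)) * x ^ d * 1) with (x ^ d)
    by (simpl; field; apply INR_fact_neq_0).
  unfold Rminus. rewrite Rplus_assoc, Rplus_opp_r, Rplus_0_r.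
  unfold Rdiv at 1. rewrite Rmult_comm, <- fsum_scal_l. apply fsum_ext. intros i.
  rewrite pow1. field. repeat split; apply INR_fact_neq_0.
Qed.

Definition power_sum (p N : nat) : R := fsum N (fun a => INR a ^ p).

Lemma faulhaber_step p x :
  fsum (S p) (fun j => bern j * (((x + 1) ^ (S p - j) - x ^ (S p - j)) / INR (fact (S p - j))))
  = x ^ p / INR (fact p).
Proof.
  transitivity (fsum (S p) (fun j => fsum (S p) (fun l =>
     if Nat.ltb l (S p - j)
     then bern j * (x ^ l / (INR (fact l) * INR (fact (S p - j - l)))) else 0))).
  { apply fsum_ext_lt. intros j Hj. rewrite pow_succ_sub_pow, <- fsum_scal_l.
    rewrite (fsum_pad (S p - j) (S p)) by lia. apply fsum_ext. intros l.
    destruct (Nat.ltb l (S p - j)); ring. }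
  rewrite fsum_swap.
  transitivity (fsum (S p) (fun l => x ^ l / INR (fact l) *
     fsum (S (p - l)) (fun j => bern j / INR (fact (p - l + 1 - j))))).
  { apply fsum_ext_lt. intros l Hl. rewrite <- fsum_scal_l.
    rewrite (fsum_pad (S (p - l)) (S p)) by lia. apply fsum_ext_lt. intros j Hj.
    destruct (Nat.ltb_spec l (S p - j)); destruct (Nat.ltb_spec j (S (p - l))); try lia.
    - replace (S p - j - l)%nat with (p - l + 1 - j)%nat by lia. field.
      split; apply INR_fact_neq_0.
    - ring. }
  rewrite (fsum_ext_lt _ _ (fun l => if Nat.eqb l p then x ^ p / INR (fact p) else 0)).
  - apply fsum_delta. lia.
  - intros l Hl. rewrite bern_rec.
    destruct (Nat.eqb_spec l p); destruct (Nat.eqb_spec (p - l) 0); try lia; [subst|]; ring.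
Qed.

Lemma faulhaber p N : power_sum p N =
  INR (fact p) * fsum (S p) (fun j => bern j * INR N ^ (S p - j) / INR (fact (S p - j))).
Proof.
  unfold power_sum. induction N as [|N IH].
  - simpl fsum at 1. rewrite fsum_eq0; [ring|].
    intros j Hj. simpl INR. rewrite pow_i by lia. unfold Rdiv. ring.
  - simpl fsum at 1. rewrite IH, S_INR.
    replace (INR N ^ p) with (INR (fact p) * (INR N ^ p / INR (fact p)))
      by (field; apply INR_fact_neq_0).
    rewrite <- faulhaber_step, <- Rmult_plus_distr_l, <- fsum_plus. f_equal.
    apply fsum_ext. intros j. field. apply INR_fact_neq_0.
Qed.

(** * The even Bernoulli numbers do not vanish *)

Definition three_integral (x : R) : Prop :=
  exists p q : Z, ~ (3 | q)%Z /\ x = IZR p / IZR q.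

Lemma not_three_divides_mul q q' : ~ (3 | q)%Z -> ~ (3 | q')%Z -> ~ (3 | q * q')%Z.
Proof. intros H H' Hqq'. destruct (prime_mult 3 prime_3 q q' Hqq'); auto. Qed.

Lemma not_three_divides_neq0 q : ~ (3 | q)%Z -> IZR q <> 0.
Proof. intros H Hq. apply H. rewrite (eq_IZR _ _ Hq). apply Z.divide_0_r. Qed.

Lemma three_integral_IZR z : three_integral (IZR z).
Proof.
  exists z, 1%Z. split; [|field].
  intros H. apply Z.divide_1_r in H. lia.
Qed.

Lemma three_integral_INR n : three_integral (INR n).
Proof. rewrite INR_IZR_INZ. apply three_integral_IZR. Qed.

Lemma three_integral_plus x y : three_integral x -> three_integral y -> three_integral (x + y).
Proof.
  intros (p & q & Hq & ->) (p' & q' & Hq' & ->).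
  exists (p * q' + p' * q)%Z, (q * q')%Z. split; [apply not_three_divides_mul; auto|].
  rewrite plus_IZR, !mult_IZR. field.
  split; apply not_three_divides_neq0; auto.
Qed.

Lemma three_integral_mult x y : three_integral x -> three_integral y -> three_integral (x * y).
Proof.
  intros (p & q & Hq & ->) (p' & q' & Hq' & ->).
  exists (p * p')%Z, (q * q')%Z. split; [apply not_three_divides_mul; auto|].
  rewrite !mult_IZR. field. split; apply not_three_divides_neq0; auto.
Qed.

Lemma three_integral_opp x : three_integral x -> three_integral (- x).
Proof.
  intros (p & q & Hq & ->). exists (- p)%Z, q. split; auto.
  rewrite opp_IZR. field. apply not_three_divides_neq0; auto.
Qed.

Lemma three_integral_fsum n f :
  (forall j, (j < n)%nat -> three_integral (f j)) -> three_integral (fsum n f).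
Proof.
  induction n as [|n IH]; intros H; simpl; [apply (three_integral_IZR 0)|].
  apply three_integral_plus; [apply IH; intros; apply H; lia | apply H; lia].
Qed.

Lemma three_divides_of_three_integral z y :
  three_integral y -> IZR z = 3 * y -> (3 | z)%Z.
Proof.
  intros (p & q & Hq & ->) E.
  assert (Ezq : (z * q = 3 * p)%Z).
  { apply eq_IZR. rewrite !mult_IZR, E. field. apply not_three_divides_neq0; auto. }
  destruct (prime_mult 3 prime_3 z q) as [|Hq3]; auto.
  - rewrite Ezq. apply Z.divide_factor_l.
  - contradiction.
Qed.

Lemma binomial_INR n j : (j <= n)%nat -> exists b : nat, Binomial.C n j = INR b.
Proof.
  revert j. induction n as [|n IH]; intros j Hj.
  - replace j with 0%nat by lia. exists 1%nat. apply C_n_0.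
  - destruct j as [|j]; [exists 1%nat; apply C_n_0|].
    destruct (Nat.eq_dec j n) as [->|Hjn].
    + exists 1%nat. apply C_n_n.
    + rewrite <- pascal by lia.
      destruct (IH j ltac:(lia)) as [a ->], (IH (S j) ltac:(lia)) as [b ->].
      exists (a + b)%nat. apply eq_sym, plus_INR.
Qed.

Lemma three_integral_binomial n j : (j <= n)%nat -> three_integral (Binomial.C n j).
Proof. intros H. destruct (binomial_INR n j H) as [b ->]. apply three_integral_INR. Qed.

Lemma three_integral_pow3_div k n :
  (0 < n)%nat -> (n < 3 ^ S k)%nat -> three_integral (3 ^ k / INR n).
Proof.
  revert k. induction n as [n IH] using (well_founded_induction lt_wf). intros k Hn Hk.
  destruct (Nat.eq_dec (n mod 3) 0) as [Hdiv|Hndiv].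
  - apply Nat.Div0.div_exact in Hdiv.
    destruct k as [|k]; [simpl in Hk; lia|].
    rewrite Hdiv, mult_INR.
    assert (Hn3 : INR (n / 3) <> 0) by (apply not_0_INR; lia).
    replace (3 ^ S k / (INR 3 * INR (n / 3))) with (3 ^ k / INR (n / 3))
      by (simpl; field; exact Hn3).
    apply IH; simpl in *; lia.
  - exists (3 ^ Z.of_nat k)%Z, (Z.of_nat n). split.
    + intros H. apply Hndiv, Nat2Z.inj. rewrite Nat2Z.inj_mod.
      apply Z.mod_divide; [lia|exact H].
    + rewrite pow_IZR, <- INR_IZR_INZ. reflexivity.
Qed.

Definition bern_fact (n : nat) : R := INR (fact n) * bern n.

Lemma power_sum_three p : (1 <= p)%nat -> power_sum p 3 = 1 + 2 ^ p.
Proof.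
  intros Hp. unfold power_sum. simpl. rewrite pow_i, pow1 by lia.
  replace (1 + 1) with 2 by ring. ring.
Qed.

Definition faulhaber3_tail (p : nat) : R :=
  fsum p (fun j => Binomial.C p j * (3 * bern_fact j) * (3 ^ (p - j - 1) / INR (p - j + 1))).

Lemma power_sum_three_bern p : (1 <= p)%nat ->
  power_sum p 3 = 3 * bern_fact p + 3 * faulhaber3_tail p.
Proof.
  intros Hp. unfold faulhaber3_tail. rewrite faulhaber, fsum_Sr.
  rewrite Rmult_plus_distr_l, <- !fsum_scal_l, (Rplus_comm (3 * bern_fact p)). f_equal.
  - apply fsum_ext_lt. intros j Hj.
    replace p with (j + S (p - j - 1))%nat at 1 2 3 4 by lia. set (d := (p - j - 1)%nat).
    replace (S (j + S d) - j)%nat with (S (S d)) by lia.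
    replace (p - j + 1)%nat with (S (S d)) by lia.
    unfold Binomial.C, bern_fact. replace (j + S d - j)%nat with (S d) by lia.
    rewrite (fact_simpl (S d)), mult_INR. replace (INR 3) with 3 by (simpl; ring).
    simpl pow. field. repeat split; try apply INR_fact_neq_0; apply not_0_INR; lia.
  - replace (S p - p)%nat with 1%nat by lia. unfold bern_fact. simpl. field.
Qed.

Lemma succ_lt_pow3 d : (1 <= d)%nat -> (S d < 3 ^ d)%nat.
Proof.
  induction d as [|d IH]; intros Hd; [lia|].
  destruct d as [|d]; [simpl; lia|]. specialize (IH ltac:(lia)). simpl in *. lia.
Qed.

Lemma three_integral_faulhaber3_tail p :
  (forall j, (j < p)%nat -> three_integral (3 * bern_fact j)) ->
  three_integral (faulhaber3_tail p).
Proof.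
  intros H. apply three_integral_fsum. intros j Hj.
  apply three_integral_mult; [apply three_integral_mult|].
  - apply three_integral_binomial. lia.
  - apply H, Hj.
  - apply three_integral_pow3_div; [lia|].
    replace (S (p - j - 1)) with (p - j)%nat by lia.
    replace (p - j + 1)%nat with (S (p - j)) by lia. apply succ_lt_pow3. lia.
Qed.

Lemma three_integral_bern_fact n : three_integral (3 * bern_fact n).
Proof.
  induction n as [n IH] using (well_founded_induction lt_wf).
  destruct n as [|n].
  { unfold bern_fact, bern. simpl. rewrite !Rmult_1_r. apply (three_integral_IZR 3). }
  assert (E := power_sum_three_bern (S n) ltac:(lia)).
  rewrite power_sum_three in E by lia.
  replace (3 * bern_fact (S n)) with (IZR (1 + 2 ^ Z.of_nat (S n)) + - (3 * faulhaber3_tail (S n)))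
    by (rewrite plus_IZR, <- pow_IZR; lra).
  apply three_integral_plus; [apply three_integral_IZR|].
  apply three_integral_opp, three_integral_mult; [apply (three_integral_IZR 3)|].
  apply three_integral_faulhaber3_tail. intros j Hj. apply IH, Hj.
Qed.

Lemma not_three_divides_succ_pow4 k : ~ (3 | 1 + 4 ^ Z.of_nat k)%Z.
Proof.
  assert (H4 : ((4 ^ Z.of_nat k) mod 3 = 1)%Z).
  { induction k as [|k IH]; [reflexivity|].
    rewrite Nat2Z.inj_succ, Z.pow_succ_r, Z.mul_mod, IH by lia. reflexivity. }
  rewrite <- Z.mod_divide, Z.add_mod, H4 by lia. discriminate.
Qed.

Lemma bern_even_neq0 k : (1 <= k)%nat -> bern (2 * k) <> 0.
Proof.
  intros Hk Hb.
  assert (E := power_sum_three_bern (2 * k) ltac:(lia)).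
  rewrite power_sum_three in E by lia.
  unfold bern_fact at 1 in E. rewrite Hb, Rmult_0_r, Rmult_0_r, Rplus_0_l in E.
  apply (not_three_divides_succ_pow4 k).
  apply (three_divides_of_three_integral _ (faulhaber3_tail (2 * k))).
  - apply three_integral_faulhaber3_tail. intros j _. apply three_integral_bern_fact.
  - rewrite plus_IZR, <- pow_IZR, <- E, pow_mult. do 2 f_equal. ring.
Qed.

Lemma bern_fact_even_neq0 k : (1 <= k)%nat -> bern_fact (2 * k) <> 0.
Proof.
  intros Hk. apply Rmult_integral_contrapositive_currified;
    [apply INR_fact_neq_0 | apply bern_even_neq0; exact Hk].
Qed.

(** * Riemann sums of even polynomials *)

Lemma eq0_of_abs_le_div_nat x K : (forall N, (2 <= N)%nat -> Rabs x <= K / INR N) -> x = 0.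
Proof.
  intros H. destruct (Req_dec x 0) as [|Hx]; auto. exfalso.
  assert (Hax : 0 < Rabs x) by (apply Rabs_pos_lt; auto).
  destruct (INR_unbounded (K / Rabs x)) as [n Hn].
  assert (HN : INR n < INR (n + 2)) by (apply lt_INR; lia).
  assert (HN0 : 0 < INR (n + 2)) by (apply lt_0_INR; lia).
  specialize (H (n + 2)%nat ltac:(lia)).
  apply (Rmult_le_compat_r (INR (n + 2))) in H; [|lra].
  unfold Rdiv in *. rewrite Rmult_assoc, Rinv_l, Rmult_1_r in H by lra.
  apply (Rmult_lt_compat_r (Rabs x)) in Hn; auto.
  rewrite Rmult_assoc, Rinv_l, Rmult_1_r in Hn by lra. nra.
Qed.

Lemma inv_poly_const_eq0 D a :
  (forall N, (2 <= N)%nat -> fsum (S D) (fun j => a j / INR N ^ j) = 0) -> a 0%nat = 0.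
Proof.
  intros H. apply (eq0_of_abs_le_div_nat _ (fsum D (fun j => Rabs (a (S j))))).
  intros N HN. specialize (H N HN). rewrite fsum_Sl in H.
  assert (HN1 : 1 <= INR N) by (apply (le_INR 1); lia).
  replace (a 0%nat) with (- fsum D (fun j => a (S j) / INR N ^ S j))
    by (rewrite pow_O in H; unfold Rdiv at 1 in H; rewrite Rinv_1 in H; lra).
  rewrite Rabs_Ropp. eapply Rle_trans; [apply Rabs_fsum|].
  unfold Rdiv at 2. rewrite Rmult_comm, <- fsum_scal_l. apply fsum_le. intros j _.
  assert (HNj : 1 <= INR N ^ j) by (apply pow_R1_Rle; lra).
  simpl pow. unfold Rdiv.
  rewrite Rabs_mult, Rabs_inv, (Rabs_pos_eq (INR N * _)), Rinv_mult by (apply Rmult_le_pos; lra).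
  assert (Hinv : 0 < / INR N) by (apply Rinv_0_lt_compat; lra).
  assert (Hinvj : 0 < / INR N ^ j <= 1)
    by (split; [apply Rinv_0_lt_compat; lra | rewrite <- Rinv_1; apply Rinv_le_contravar; lra]).
  assert (0 <= Rabs (a (S j)) * / INR N) by (apply Rmult_le_pos; [apply Rabs_pos | lra]).
  nra.
Qed.

Lemma inv_poly_coef_eq0 D a :
  (forall N, (2 <= N)%nat -> fsum D (fun j => a j / INR N ^ j) = 0) ->
  forall j, (j < D)%nat -> a j = 0.
Proof.
  revert a. induction D as [|D IH]; intros a H j Hj; [lia|].
  assert (Ha0 : a 0%nat = 0) by (apply (inv_poly_const_eq0 D a H)).
  destruct j as [|j]; auto.
  apply (IH (fun i => a (S i))); [|lia].
  intros N HN. specialize (H N HN). rewrite fsum_Sl, Ha0 in H.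
  assert (HN0 : 0 < INR N) by (apply lt_0_INR; lia).
  replace (fsum D (fun i => a (S i) / INR N ^ i))
    with (INR N * fsum D (fun i => a (S i) / INR N ^ S i)).
  - unfold Rdiv at 1 in H. rewrite Rmult_0_l, Rplus_0_l in H. rewrite H. ring.
  - rewrite <- fsum_scal_l. apply fsum_ext. intros i. simpl pow. field.
    split; [apply pow_nonzero|]; lra.
Qed.

Definition even_poly (r : nat -> R) (m : nat) (x : R) : R :=
  fsum (S m) (fun k => r k * x ^ (2 * k)).

Lemma even_poly_0 r m : even_poly r m 0 = r 0%nat.
Proof.
  unfold even_poly. rewrite fsum_Sl, fsum_eq0; [simpl; ring|].
  intros k _. rewrite pow_i by lia. ring.
Qed.

Lemma Rabs_even_poly_le r m x :
  0 <= x <= 1 -> Rabs (even_poly r m x) <= fsum (S m) (fun k => Rabs (r k)).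
Proof.
  intros Hx. eapply Rle_trans; [apply Rabs_fsum|]. apply fsum_le. intros k _.
  rewrite Rabs_mult, (Rabs_pos_eq (x ^ _)) by (apply pow_le; lra).
  rewrite <- (Rmult_1_r (Rabs (r k))) at 2. apply Rmult_le_compat_l; [apply Rabs_pos|].
  rewrite <- (pow1 (2 * k)). apply pow_incr. lra.
Qed.

Definition faulhaber_coef (p j : nat) : R :=
  if Nat.leb j p then INR (fact p) * bern j / INR (fact (S p - j)) else 0.

Lemma power_sum_div_pow p N D : (p < D)%nat -> (1 <= N)%nat ->
  power_sum p N / INR N ^ p = INR N * fsum D (fun j => faulhaber_coef p j / INR N ^ j).
Proof.
  intros HpD HN. assert (HN0 : 0 < INR N) by (apply lt_0_INR; lia).
  rewrite faulhaber, (fsum_pad (S p) D) by lia.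
  unfold Rdiv at 1. rewrite Rmult_comm, <- Rmult_assoc, <- !fsum_scal_l.
  apply fsum_ext. intros j. unfold faulhaber_coef.
  destruct (Nat.ltb_spec j (S p)); destruct (Nat.leb_spec j p); try lia; [|unfold Rdiv; ring].
  replace (INR N ^ p) with (INR N ^ (S p - j) * INR N ^ j / INR N).
  - field. repeat split; try apply INR_fact_neq_0; try apply pow_nonzero; lra.
  - rewrite <- pow_add. replace (S p - j + j)%nat with (S p) by lia. simpl. field. lra.
Qed.

Lemma riemann_sum_power_sums r m l :
  fsum (S l) (fun i => even_poly r m (INR (S i) / INR (l + 2))) =
  fsum (S m) (fun k => r k * (power_sum (2 * k) (l + 2) / INR (l + 2) ^ (2 * k))) - r 0%nat.
Proof.
  set (N := (l + 2)%nat). rewrite <- (even_poly_0 r m).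
  unfold even_poly. rewrite fsum_swap, <- fsum_minus. apply fsum_ext. intros k.
  rewrite (fsum_ext _ _ (fun i => r k / INR N ^ (2 * k) * INR (S i) ^ (2 * k)))
    by (intros i; unfold Rdiv; rewrite Rpow_mult_distr, pow_inv; ring).
  rewrite fsum_scal_l. unfold power_sum, N. replace (l + 2)%nat with (S (S l)) by lia.
  rewrite (fsum_Sl (S l)). simpl (INR 0).
  assert (HNk : INR (S (S l)) ^ (2 * k) <> 0) by (apply pow_nonzero, not_0_INR; lia).
  destruct k as [|k]; [simpl; field | rewrite pow_i by lia; field]; auto.
Qed.

(* [riemann_coef r m j] is the coefficient of N^(1-j) in the sum of
   [even_poly r m (a / N)] over 0 < a < N; the correction at [j = 1] removes the
   term 0^0 = 1 of [power_sum 0 N]. *)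
Definition riemann_coef (r : nat -> R) (m j : nat) : R :=
  fsum (S m) (fun k => r k * faulhaber_coef (2 * k) j) - (if Nat.eqb j 1 then r 0%nat else 0).

Lemma riemann_sum_even_poly r m l :
  fsum (S l) (fun i => even_poly r m (INR (S i) / INR (l + 2))) =
  INR (l + 2) * fsum (2 * m + 2) (fun j => riemann_coef r m j / INR (l + 2) ^ j).
Proof.
  rewrite riemann_sum_power_sums.
  set (N := (l + 2)%nat). assert (HN0 : 0 < INR N) by (apply lt_0_INR; unfold N; lia).
  transitivity (INR N * fsum (2 * m + 2) (fun j =>
                  fsum (S m) (fun k => r k * faulhaber_coef (2 * k) j) / INR N ^ j)
              - INR N * fsum (2 * m + 2) (fun j =>
                  (if Nat.eqb j 1 then r 0%nat else 0) / INR N ^ j)).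
  - f_equal.
    + rewrite (fsum_ext_lt (S m) _ (fun k => r k * (INR N * fsum (2 * m + 2)
        (fun j => faulhaber_coef (2 * k) j / INR N ^ j))))
        by (intros k Hk; rewrite (power_sum_div_pow _ _ (2 * m + 2)) by (unfold N; lia);
            reflexivity).
      transitivity (fsum (S m) (fun k => fsum (2 * m + 2) (fun j =>
                      INR N * (r k * faulhaber_coef (2 * k) j / INR N ^ j)))).
      { apply fsum_ext. intros k. rewrite <- !fsum_scal_l. apply fsum_ext. intros j.
        unfold Rdiv. ring. }
      rewrite fsum_swap, <- fsum_scal_l. apply fsum_ext. intros j.
      rewrite fsum_scal_l. f_equal. unfold Rdiv.
      rewrite Rmult_comm, <- fsum_scal_l. apply fsum_ext. intros k. ring.
    + rewrite (fsum_ext _ _ (fun j => if Nat.eqb j 1 then r 0%nat / INR N else 0)).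
      * rewrite fsum_delta by lia. field. lra.
      * intros j. destruct (Nat.eqb_spec j 1) as [->|]; [simpl; field; lra | unfold Rdiv; ring].
  - rewrite <- Rmult_minus_distr_l, <- fsum_minus. f_equal.
    apply fsum_ext. intros j. unfold riemann_coef, Rdiv. ring.
Qed.

Lemma riemann_coef_even r m k : (1 <= k <= m)%nat ->
  (forall k', (k < k' <= m)%nat -> r k' = 0) ->
  riemann_coef r m (2 * k) = r k * bern_fact (2 * k).
Proof.
  intros Hk Hhigh. unfold riemann_coef.
  rewrite (proj2 (Nat.eqb_neq (2 * k) 1)), Rminus_0_r by lia.
  rewrite (fsum_ext_lt (S m) _ (fun k' => if Nat.eqb k' k then r k * bern_fact (2 * k) else 0)).
  - apply fsum_delta. lia.
  - intros k' Hk'. unfold faulhaber_coef. destruct (Nat.eqb_spec k' k) as [->|Hne].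
    + rewrite Nat.leb_refl. replace (S (2 * k) - 2 * k)%nat with 1%nat by lia.
      unfold bern_fact. simpl. field.
    + destruct (Nat.leb_spec (2 * k) (2 * k')); [rewrite Hhigh by lia|]; ring.
Qed.

Lemma even_poly_riemann_sums_eq0 r m :
  (forall l, fsum (S l) (fun i => even_poly r m (INR (S i) / INR (l + 2))) = 0) ->
  forall k, (k <= m)%nat -> r k = 0.
Proof.
  intros H.
  assert (Hcoef : forall j, (j < 2 * m + 2)%nat -> riemann_coef r m j = 0).
  { apply inv_poly_coef_eq0. intros N HN. specialize (H (N - 2)%nat).
    rewrite riemann_sum_even_poly in H. replace (N - 2 + 2)%nat with N in H by lia.
    apply Rmult_integral in H. destruct H as [H|H]; auto.
    exfalso. apply (not_0_INR N); [lia | exact H]. }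
  assert (Hpos : forall d k, (1 <= k)%nat -> (k + d = m)%nat -> r k = 0).
  { induction d as [d IH] using (well_founded_induction lt_wf). intros k Hk Hkd.
    assert (Ek := Hcoef (2 * k)%nat ltac:(lia)).
    rewrite (riemann_coef_even r m k) in Ek; [|lia|intros k' Hk'; apply (IH (m - k')%nat); lia].
    apply Rmult_integral in Ek as [Hr|Hb]; [exact Hr|].
    exfalso. apply (bern_fact_even_neq0 k Hk Hb). }
  intros k Hk. destruct k as [|k]; [|apply (Hpos (m - S k)%nat); lia].
  specialize (H 0%nat). simpl fsum in H. rewrite Rplus_0_l in H. rewrite <- H.
  unfold even_poly. rewrite fsum_Sl, fsum_eq0; [simpl; ring|].
  intros i Hi. rewrite (Hpos (m - S i)%nat (S i)) by lia. ring.
Qed.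

(** * Double series and their Dirichlet coefficients *)

Lemma ex_series_R_scal_l c (a : nat -> R) : ex_series a -> ex_series (fun n => c * a n).
Proof. apply (@ex_series_scal_l R_AbsRing R_NormedModule). Qed.

Lemma ex_series_R_plus (a b : nat -> R) :
  ex_series a -> ex_series b -> ex_series (fun n => a n + b n).
Proof. apply (@ex_series_plus R_AbsRing R_NormedModule). Qed.

Lemma ex_series_R_le (a b : nat -> R) :
  (forall n, Rabs (a n) <= b n) -> ex_series b -> ex_series a.
Proof. apply (@ex_series_le R_AbsRing R_CompleteNormedModule). Qed.

Lemma Series_zero : Series (fun _ => 0) = 0.
Proof. rewrite (Series_ext _ (fun _ => 0 * 0)), Series_scal_l by (intros; ring). ring. Qed.

Lemma ex_series_finite a K : (forall j, (K <= j)%nat -> a j = 0) ->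
  ex_series a /\ Series a = fsum K a.
Proof.
  intros H. assert (Ha : is_series a (fsum K a)).
  { apply is_series_Reals. intros eps Heps. exists K. intros n Hn.
    rewrite sum_f_R0_fsum. replace (S n) with (K + (S n - K))%nat by lia.
    rewrite fsum_add, (fsum_eq0 (S n - K)) by (intros; apply H; lia).
    unfold Rdist. rewrite Rplus_0_r, Rminus_diag, Rabs_R0. exact Heps. }
  split; [exists (fsum K a); exact Ha | apply is_series_unique, Ha].
Qed.

(* Weights whose series telescopes to 1 and whose products dominate (i+j+2)^-4. *)
Definition pronic_inv (j : nat) : R := / (INR (S j) * INR (S (S j))).

Lemma pronic_inv_pos j : 0 < pronic_inv j.
Proof. apply Rinv_0_lt_compat, Rmult_lt_0_compat; apply lt_0_INR; lia. Qed.

Lemma is_series_pronic_inv : is_series pronic_inv 1.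
Proof.
  assert (Htel : forall n, sum_f_R0 pronic_inv n = 1 - / INR (S (S n))).
  { induction n as [|n IH]; [unfold pronic_inv; simpl; field|].
    rewrite tech5, IH. unfold pronic_inv. rewrite !S_INR.
    assert (0 <= INR n) by apply pos_INR.
    field. repeat split; apply Rgt_not_eq; lra. }
  apply is_series_Reals. intros eps Heps.
  destruct (archimed_cor1 eps Heps) as [N [HN HN0]]. exists N. intros n Hn.
  rewrite Htel. unfold Rdist.
  replace (1 - / INR (S (S n)) - 1) with (- / INR (S (S n))) by ring.
  rewrite Rabs_Ropp, Rabs_pos_eq by (left; apply Rinv_0_lt_compat, lt_0_INR; lia).
  eapply Rle_lt_trans; [|exact HN].
  apply Rinv_le_contravar; [apply lt_0_INR; lia | apply le_INR; lia].
Qed.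

Lemma ex_series_pronic_inv : ex_series pronic_inv.
Proof. exists 1. apply is_series_pronic_inv. Qed.

Lemma Series_pronic_inv : Series pronic_inv = 1.
Proof. apply is_series_unique, is_series_pronic_inv. Qed.

Definition dsum (f : nat -> nat -> R) : R := Series (fun i => Series (f i)).

Definition dsummable (f : nat -> nat -> R) : Prop :=
  (forall i, ex_series (f i)) /\ ex_series (fun i => Series (f i)).

Lemma dsum_ext f g : (forall i j, f i j = g i j) -> dsum f = dsum g.
Proof. intros H. apply Series_ext. intros i. apply Series_ext, H. Qed.

Lemma Series_le_pronic (a : nat -> R) K : (forall j, Rabs (a j) <= K * pronic_inv j) ->
  ex_series a /\ Rabs (Series a) <= K.
Proof.
  intros H.
  assert (HK : ex_series (fun j => K * pronic_inv j))
    by apply ex_series_R_scal_l, ex_series_pronic_inv.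
  assert (Ha : ex_series (fun j => Rabs (a j))).
  { apply (ex_series_R_le _ (fun j => K * pronic_inv j)); [|exact HK].
    intros j. rewrite Rabs_Rabsolu. apply H. }
  split; [apply (ex_series_R_le _ _ H HK)|].
  eapply Rle_trans; [apply Series_Rabs, Ha|].
  rewrite <- (Rmult_1_r K), <- Series_pronic_inv, <- Series_scal_l.
  apply Series_le; [|exact HK]. intros j. split; [apply Rabs_pos | apply H].
Qed.

Lemma dsum_bound f K : (forall i j, Rabs (f i j) <= K * (pronic_inv i * pronic_inv j)) ->
  dsummable f /\ Rabs (dsum f) <= K.
Proof.
  intros H.
  assert (Hrow : forall i, ex_series (f i) /\ Rabs (Series (f i)) <= K * pronic_inv i).
  { intros i. apply Series_le_pronic. intros j.
    rewrite Rmult_assoc. apply H. }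
  destruct (Series_le_pronic (fun i => Series (f i)) K (fun i => proj2 (Hrow i))) as [Hex Hle].
  split; [split; [intros i; apply Hrow | exact Hex] | exact Hle].
Qed.

Lemma dsum_plus f g : dsummable f -> dsummable g ->
  dsummable (fun i j => f i j + g i j) /\ dsum (fun i j => f i j + g i j) = dsum f + dsum g.
Proof.
  intros [Hf Hf'] [Hg Hg'].
  assert (E : forall i, Series (fun j => f i j + g i j) = Series (f i) + Series (g i))
    by (intros; apply Series_plus; auto).
  unfold dsum. rewrite (Series_ext _ _ E), Series_plus by auto.
  split; [split|reflexivity].
  - intros i. apply ex_series_R_plus; auto.
  - eapply ex_series_ext; [intros i; symmetry; apply E | apply ex_series_R_plus; auto].
Qed.

Lemma dsum_scal c f : dsummable f ->
  dsummable (fun i j => c * f i j) /\ dsum (fun i j => c * f i j) = c * dsum f.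
Proof.
  intros [Hf Hf'].
  assert (E : forall i, Series (fun j => c * f i j) = c * Series (f i))
    by (intros; apply Series_scal_l).
  unfold dsum. rewrite (Series_ext _ _ E), Series_scal_l.
  split; [split|reflexivity].
  - intros i. apply ex_series_R_scal_l; auto.
  - eapply ex_series_ext; [intros i; symmetry; apply E | apply ex_series_R_scal_l; auto].
Qed.

Lemma dsum_fsum M (r : nat -> R) (f : nat -> nat -> nat -> R) :
  (forall k, (k < M)%nat -> dsummable (f k)) ->
  dsummable (fun i j => fsum M (fun k => r k * f k i j)) /\
  dsum (fun i j => fsum M (fun k => r k * f k i j)) = fsum M (fun k => r k * dsum (f k)).
Proof.
  induction M as [|M IH]; intros H; simpl.
  - destruct (dsum_bound (fun _ _ => 0) 0) as [H0 _].
    { intros. rewrite Rabs_R0, Rmult_0_l. lra. }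
    split; [exact H0|].
    unfold dsum. rewrite (Series_ext _ _ (fun _ => Series_zero)). apply Series_zero.
  - destruct (IH (fun k Hk => H k ltac:(lia))) as [S1 E1].
    destruct (dsum_scal (r M) (f M) (H M ltac:(lia))) as [S2 E2].
    destruct (dsum_plus _ _ S1 S2) as [S3 E3].
    split; [exact S3|]. rewrite E3, E1, E2. reflexivity.
Qed.

Lemma dsum_triangle f L : (forall i j, (L <= i + j)%nat -> f i j = 0) ->
  dsummable f /\ dsum f = fsum L (fun t => fsum (S t) (fun i => f i (t - i)%nat)).
Proof.
  intros H.
  assert (Hrow : forall i, ex_series (f i) /\ Series (f i) = fsum (L - i) (f i))
    by (intros i; apply ex_series_finite; intros j Hj; apply H; lia).
  destruct (ex_series_finite (fun i => Series (f i)) L) as [Hex Hsum].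
  { intros i Hi. rewrite (proj2 (Hrow i)). replace (L - i)%nat with 0%nat by lia. reflexivity. }
  split; [split; [intros i; apply Hrow | exact Hex]|].
  unfold dsum. rewrite Hsum, <- fsum_triangle. apply fsum_ext. intros i. apply Hrow.
Qed.

Lemma inv_pow_le_pronic i j p B : 1 <= B -> B <= INR (S i + S j) ->
  / INR (S i + S j) ^ (p + 4) <= / B ^ p * (pronic_inv i * pronic_inv j).
Proof.
  intros HB HBM. unfold pronic_inv. rewrite plus_INR in *. rewrite (S_INR (S i)), (S_INR (S j)).
  set (a := INR (S i)) in *. set (b := INR (S j)) in *.
  assert (Ha : 1 <= a) by (apply (le_INR 1); lia).
  assert (Hb : 1 <= b) by (apply (le_INR 1); lia).
  rewrite <- !Rinv_mult. apply Rinv_le_contravar.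
  - repeat apply Rmult_lt_0_compat; try apply pow_lt; lra.
  - rewrite pow_add. apply Rmult_le_compat; [apply pow_le; lra | nra | apply pow_incr; lra |].
    replace ((a + b) ^ 4) with ((a + b) ^ 2 * (a + b) ^ 2) by ring.
    apply Rmult_le_compat; nra.
Qed.

Lemma eq0_of_abs_le_geom x K q : 0 <= q < 1 -> (forall p, Rabs x <= K * q ^ p) -> x = 0.
Proof.
  intros Hq H. destruct (Req_dec x 0) as [|Hx]; auto. exfalso.
  assert (Hax : 0 < Rabs x) by (apply Rabs_pos_lt; auto).
  assert (HK : 0 < K) by (specialize (H 0%nat); simpl in H; lra).
  destruct (pow_lt_1_zero q ltac:(rewrite Rabs_pos_eq; lra) (Rabs x / K)) as [P HP].
  { apply Rdiv_lt_0_compat; auto. }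
  specialize (HP P (le_n _)). specialize (H P).
  rewrite Rabs_pos_eq in HP by (apply pow_le; lra).
  apply (Rmult_lt_compat_l K) in HP; auto. unfold Rdiv in HP.
  rewrite (Rmult_comm (Rabs x)), <- Rmult_assoc, Rinv_r, Rmult_1_l in HP; lra.
Qed.

Lemma dirichlet_leading_term (h : nat -> nat -> R) C l p :
  (forall i j, Rabs (h i j) <= C) ->
  (forall t, (t < l)%nat -> fsum (S t) (fun i => h i (t - i)%nat) = 0) ->
  Rabs (dsum (fun i j => h i j / INR (S i + S j) ^ (p + 4))
        - fsum (S l) (fun i => h i (l - i)%nat) / INR (l + 2) ^ (p + 4))
  <= C / INR (l + 3) ^ p.
Proof.
  intros Hh Hlow.
  set (u := fun i j => h i j / INR (S i + S j) ^ (p + 4)).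
  set (w := fun i j => if Nat.ltb (i + j) (S l) then u i j else 0).
  set (v := fun i j => if Nat.ltb (i + j) (S l) then 0 else u i j).
  assert (Hu : forall i j, Rabs (u i j) <= C * / INR (S i + S j) ^ (p + 4)).
  { intros i j. unfold u, Rdiv. rewrite Rabs_mult, (Rabs_pos_eq (/ _)).
    - apply Rmult_le_compat_r; [left; apply Rinv_0_lt_compat, pow_lt, lt_0_INR; lia | apply Hh].
    - left; apply Rinv_0_lt_compat, pow_lt, lt_0_INR; lia. }
  assert (HC : 0 <= C) by (eapply Rle_trans; [apply Rabs_pos | apply (Hh 0%nat 0%nat)]).
  destruct (dsum_triangle w (S l)) as [Sw Ew].
  { intros i j Hij. unfold w. destruct (Nat.ltb_spec (i + j) (S l)); [lia | reflexivity]. }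
  destruct (dsum_bound v (C / INR (l + 3) ^ p)) as [Sv Bv].
  { intros i j. unfold v. destruct (Nat.ltb_spec (i + j) (S l)).
    - rewrite Rabs_R0. apply Rmult_le_pos; [|apply Rmult_le_pos; left; apply pronic_inv_pos].
      apply Rmult_le_pos; [exact HC | left; apply Rinv_0_lt_compat, pow_lt, lt_0_INR; lia].
    - eapply Rle_trans; [apply Hu|]. unfold Rdiv. rewrite Rmult_assoc.
      apply Rmult_le_compat_l; [exact HC|]. apply inv_pow_le_pronic.
      + apply (le_INR 1); lia.
      + apply le_INR; lia. }
  destruct (dsum_plus w v Sw Sv) as [_ Ewv].
  replace (dsum u) with (dsum w + dsum v) by (rewrite <- Ewv; apply dsum_ext; intros i j;
    unfold w, v; destruct (Nat.ltb (i + j) (S l)); ring).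
  replace (dsum w) with (fsum (S l) (fun i => h i (l - i)%nat) / INR (l + 2) ^ (p + 4)).
  { replace (_ + dsum v - _) with (dsum v) by ring. exact Bv. }
  rewrite Ew, (fsum_Sr l (fun t => fsum (S t) (fun i => w i (t - i)%nat))).
  rewrite (fsum_eq0 l), Rplus_0_l.
  - unfold Rdiv. rewrite Rmult_comm, <- fsum_scal_l. apply fsum_ext_lt. intros i Hi.
    unfold w, u. rewrite (proj2 (Nat.ltb_lt _ _)) by lia.
    replace (S i + S (l - i))%nat with (l + 2)%nat by lia. unfold Rdiv. ring.
  - intros t Ht.
    rewrite (fsum_ext_lt _ _ (fun i => / INR (t + 2) ^ (p + 4) * h i (t - i)%nat)),
      fsum_scal_l, (Hlow t Ht), Rmult_0_r; [reflexivity|].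
    intros i Hi. unfold w, u. rewrite (proj2 (Nat.ltb_lt _ _)) by lia.
    replace (S i + S (t - i))%nat with (t + 2)%nat by lia. unfold Rdiv. ring.
Qed.

Lemma antidiagonal_sums_eq0 (h : nat -> nat -> R) C :
  (forall i j, Rabs (h i j) <= C) ->
  (forall p, dsum (fun i j => h i j / INR (S i + S j) ^ (p + 4)) = 0) ->
  forall l, fsum (S l) (fun i => h i (l - i)%nat) = 0.
Proof.
  intros Hh Hd l. induction l as [l IH] using (well_founded_induction lt_wf).
  set (N := INR (l + 2)).
  assert (HN : 2 <= N) by (unfold N; replace 2 with (INR 2) by reflexivity; apply le_INR; lia).
  assert (HN3 : INR (l + 3) = N + 1)
    by (unfold N; replace (l + 3)%nat with (S (l + 2)) by lia; apply S_INR).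
  apply (eq0_of_abs_le_geom _ (C * N ^ 4) (N / (N + 1))).
  { split; [apply Rmult_le_pos; [lra | left; apply Rinv_0_lt_compat; lra]|].
    apply (Rmult_lt_reg_r (N + 1)); [lra|]. unfold Rdiv. rewrite Rmult_assoc, Rinv_l; lra. }
  intros p. assert (B := dirichlet_leading_term h C l p Hh IH).
  rewrite Hd, Rminus_0_l, Rabs_Ropp, HN3 in B. fold N in B.
  assert (HNp : 0 < N ^ (p + 4)) by (apply pow_lt; lra).
  unfold Rdiv in B.
  rewrite Rabs_mult, (Rabs_pos_eq (/ _)) in B by (left; apply Rinv_0_lt_compat; lra).
  apply (Rmult_le_compat_r (N ^ (p + 4))) in B; [|lra].
  rewrite Rmult_assoc, Rinv_l, Rmult_1_r in B by lra. eapply Rle_trans; [exact B|].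
  unfold Rdiv. rewrite pow_add, Rpow_mult_distr, pow_inv. right. ring.
Qed.

(** * The double zeta values at integers *)

Definition dz_real (c n i j : nat) : R := INR (S i) ^ c / INR (S i + S j) ^ (n + c).

Definition dzeta_nat (c n : nat) : R := dsum (dz_real c n).

Lemma Rabs_dz_real_le c n i j : Rabs (dz_real c n i j) <= / INR (S i + S j) ^ n.
Proof.
  unfold dz_real. set (a := INR (S i)). set (M := INR (S i + S j)).
  assert (Ha : 0 < a) by (apply lt_0_INR; lia).
  assert (HaM : a <= M) by (apply le_INR; lia).
  assert (HMc : 0 < M ^ c) by (apply pow_lt; lra).
  assert (Hac : a ^ c <= M ^ c) by (apply pow_incr; lra).
  rewrite Rabs_pos_eq
    by (apply Rmult_le_pos; [apply pow_le | left; apply Rinv_0_lt_compat, pow_lt]; lra).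
  rewrite pow_add. unfold Rdiv. rewrite Rinv_mult.
  assert (Hq : a ^ c * / M ^ c <= 1).
  { apply (Rmult_le_reg_r (M ^ c)); [lra|].
    rewrite Rmult_assoc, Rinv_l, Rmult_1_r, Rmult_1_l by lra. exact Hac. }
  replace (a ^ c * (/ M ^ n * / M ^ c)) with (a ^ c * / M ^ c * / M ^ n) by ring.
  rewrite <- (Rmult_1_l (/ M ^ n)) at 2.
  apply Rmult_le_compat_r; [left; apply Rinv_0_lt_compat, pow_lt; lra | exact Hq].
Qed.

Lemma dsummable_dz_real c p : dsummable (dz_real c (p + 4)).
Proof.
  refine (proj1 (dsum_bound _ 1 _)). intros i j.
  eapply Rle_trans; [apply Rabs_dz_real_le|].
  replace (1 * _) with (/ 1 ^ p * (pronic_inv i * pronic_inv j))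
    by (rewrite pow1, Rinv_1; reflexivity).
  apply inv_pow_le_pronic; [lra | apply (le_INR 1); lia].
Qed.

Lemma even_poly_div_pow r m n i j :
  even_poly r m (INR (S i) / INR (S i + S j)) / INR (S i + S j) ^ n =
  fsum (S m) (fun k => r k * dz_real (2 * k) n i j).
Proof.
  assert (HM : 0 < INR (S i + S j)) by (apply lt_0_INR; lia).
  unfold even_poly, dz_real, Rdiv. rewrite Rmult_comm, <- fsum_scal_l. apply fsum_ext. intros k.
  rewrite Rpow_mult_distr, pow_inv, pow_add. field. split; apply pow_nonzero; lra.
Qed.

Lemma frac_succ_le_1 i j : 0 <= INR (S i) / INR (S i + S j) <= 1.
Proof.
  assert (Hi : 0 < INR (S i)) by (apply lt_0_INR; lia).
  assert (Hij : INR (S i) <= INR (S i + S j)) by (apply le_INR; lia).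
  split; [left; apply Rdiv_pos_pos; lra|].
  apply (Rmult_le_reg_r (INR (S i + S j))); [lra|].
  unfold Rdiv. rewrite Rmult_assoc, Rinv_l; lra.
Qed.

Lemma dzeta_nat_even_indep m r :
  (forall p, fsum (S m) (fun k => r k * dzeta_nat (2 * k) (p + 4)) = 0) ->
  forall k, (k <= m)%nat -> r k = 0.
Proof.
  intros H. apply even_poly_riemann_sums_eq0. intros l.
  set (h := fun i j => even_poly r m (INR (S i) / INR (S i + S j))).
  assert (Hh : forall i j, Rabs (h i j) <= fsum (S m) (fun k => Rabs (r k)))
    by (intros i j; apply Rabs_even_poly_le, frac_succ_le_1).
  assert (Hd : forall p, dsum (fun i j => h i j / INR (S i + S j) ^ (p + 4)) = 0).
  { intros p. unfold h. rewrite (dsum_ext _ _ (even_poly_div_pow r m (p + 4))).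
    rewrite (proj2 (dsum_fsum (S m) r (fun k => dz_real (2 * k) (p + 4))
                      (fun k _ => dsummable_dz_real (2 * k) p))).
    apply H. }
  rewrite <- (antidiagonal_sums_eq0 h _ Hh Hd l). apply fsum_ext_lt. intros i Hi.
  unfold h. replace (S i + S (l - i))%nat with (l + 2)%nat by lia. reflexivity.
Qed.

Lemma dz_term_at_nat c n i j : dz_term c (RtoC (INR n)) i j = RtoC (dz_real c n i j).
Proof.
  assert (HM : 0 < INR (S i + S j)) by (apply lt_0_INR; lia).
  unfold dz_term, cpow_neg, dz_real, RtoC. cbn [Re Im Cmult Cplus fst snd].
  rewrite Rplus_0_r, !Rmult_0_l, cos_0, sin_0, <- plus_INR, Ropp_mult_distr_l_reverse, exp_Ropp.
  change (exp (INR (n + c) * ln (INR (S i + S j)))) with (Rpower (INR (S i + S j)) (INR (n + c))).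
  rewrite Rpower_pow by exact HM. unfold Rdiv, Cmult. simpl. f_equal; ring.
Qed.

Lemma dzeta_at_nat c n : dzeta c (RtoC (INR n)) = RtoC (dzeta_nat c n).
Proof.
  unfold dzeta, dzeta_nat, dsum.
  rewrite (Series_ext _ (fun i => Series (dz_real c n i))),
    (Series_ext (fun i => Series (fun j => Im _)) (fun _ => 0)), Series_zero; [reflexivity| |].
  - intros i. rewrite <- Series_zero. apply Series_ext. intros j.
    rewrite dz_term_at_nat. reflexivity.
  - intros i. apply Series_ext. intros j. rewrite dz_term_at_nat. reflexivity.
Qed.

Definition combo_weight (k : nat) : R := match k with O => / 2 | S _ => 1 end.

Lemma combo_at_nat m coef n : combo m coef (RtoC (INR n)) =
  (dzeta_nat (2 * m + 1) n
     + fsum (S m) (fun k => Re (coef k) * combo_weight k * dzeta_nat (2 * k) n),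
   fsum (S m) (fun k => Im (coef k) * combo_weight k * dzeta_nat (2 * k) n)).
Proof.
  unfold combo. rewrite dzeta_at_nat. apply injective_projections.
  - cbn [fst]. change (fst (Cplus ?a ?b)) with (Re a + Re b).
    rewrite Re_sum_n. change (Re (RtoC ?x)) with x. f_equal.
    apply fsum_ext. intros k. rewrite dzeta_at_nat.
    destruct k; unfold Re, Im; cbn [Cmult RtoC fst snd combo_weight]; ring.
  - cbn [snd]. change (snd (Cplus ?a ?b)) with (Im a + Im b).
    rewrite Im_sum_n. change (Im (RtoC ?x)) with 0. rewrite Rplus_0_l.
    apply fsum_ext. intros k. rewrite dzeta_at_nat.
    destruct k; unfold Re, Im; cbn [Cmult RtoC fst snd combo_weight]; ring.
Qed.

Lemma combo_eq_at_nat m c d n :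
  combo m c (RtoC (INR n)) = combo m d (RtoC (INR n)) ->
  fsum (S m) (fun k => (Re (c k) - Re (d k)) * combo_weight k * dzeta_nat (2 * k) n) = 0 /\
  fsum (S m) (fun k => (Im (c k) - Im (d k)) * combo_weight k * dzeta_nat (2 * k) n) = 0.
Proof.
  rewrite !combo_at_nat. intros [HRe HIm]%pair_equal_spec. split.
  - rewrite (fsum_ext _ _ (fun k => Re (c k) * combo_weight k * dzeta_nat (2 * k) n
                                   - Re (d k) * combo_weight k * dzeta_nat (2 * k) n))
      by (intros; ring).
    rewrite fsum_minus. lra.
  - rewrite (fsum_ext _ _ (fun k => Im (c k) * combo_weight k * dzeta_nat (2 * k) n
                                   - Im (d k) * combo_weight k * dzeta_nat (2 * k) n))
      by (intros; ring).
    rewrite fsum_minus. lra.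
Qed.

Theorem corollary5p3 (m : nat) (c d : nat -> C) :
  (forall s : C, 2 < Re s -> combo m c s = RtoC 0) ->
  (forall s : C, 2 < Re s -> combo m d s = RtoC 0) ->
  forall k : nat, (k <= m)%nat -> c k = d k.
Proof.
  intros Hc Hd k Hk.
  assert (Hcd : forall p, combo m c (RtoC (INR (p + 4))) = combo m d (RtoC (INR (p + 4)))).
  { intros p. assert (Hs : 2 < Re (RtoC (INR (p + 4)))).
    { simpl Re. replace 2 with (INR 2) by (simpl; ring). apply lt_INR. lia. }
    rewrite Hc, Hd by exact Hs. reflexivity. }
  assert (HRe := dzeta_nat_even_indep m _ (fun p => proj1 (combo_eq_at_nat m c d _ (Hcd p))) k Hk).
  assert (HIm := dzeta_nat_even_indep m _ (fun p => proj2 (combo_eq_at_nat m c d _ (Hcd p))) k Hk).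
  assert (Hw : forall x y, (x - y) * combo_weight k = 0 -> x = y).
  { intros x y H. apply Rmult_integral in H as [H|H]; [lra|].
    destruct k; simpl in H; lra. }
  apply injective_projections; apply Hw; assumption.
Qed.
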